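(* Let $K\subset\mathbb{R}^n$ be a closed convex set with diameter $d$, and let $r$ be the largest radius of a Euclidean ball fully contained in $K$. Then the LSE is minimax optimal (i.e. $\varepsilon_K(\sigma)\lesssim\varepsilon^*(\sigma)$) whenever $\sigma\lesssim r/\sqrt n$ or $\sigma\gtrsim d$.
   Context: Gaussian sequence model: $Y=\mu+\xi$, $\mu\in K$, $\xi\sim N(0,\sigma^2\mathbb{I}_n)$; LSE $\hat\mu=\operatorname{argmin}_{\nu\in K}\|Y-\nu\|_2^2$; $\varepsilon_K(\sigma)^2=\sup_{\mu\in K}\mathbb{E}_\mu\|\hat\mu-\mu\|_2^2$. $M(\eta,T)$: maximal cardinality of a subset of $T$ with pairwise distances $>\eta$; $M^{\mathrm{loc}}(\varepsilon)=\sup_{\theta\in K}M(\varepsilon/c^*,B(\theta,\varepsilon)\cap K)$ for a large absolute constant $c^*$ ($B$ the closed Euclidean ball); $\varepsilon^*(\sigma)=\sup\{\varepsilon:\varepsilon^2/\sigma^2\le\log M^{\mathrm{loc}}(\varepsilon)\}$, whose square is up to constants the minimax risk over $K$. $\lesssim,\gtrsim$ hide absolute constants. *)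

From HB Require Import structures.
From mathcomp Require Import all_boot all_order all_algebra.
From mathcomp Require Import all_classical all_reals all_analysis.
Set Implicit Arguments. Unset Strict Implicit. Unset Printing Implicit Defensive.
Import Order.TTheory GRing.Theory Num.Theory.
Local Open Scope classical_set_scope.
Local Open Scope ring_scope.

Section defs.
Variables (R : realType) (n : nat).
Implicit Types (x y : 'rV[R]_n) (K T : set 'rV[R]_n).

Definition enorm x : R := Num.sqrt (\sum_(i < n) x ord0 i ^+ 2).
Definition edist x y : R := enorm (x - y).

Definition eball x (rho : R) : set 'rV[R]_n := [set y | edist y x <= rho].

Definition convex_set_e K : Prop :=
  forall x y (t : R), K x -> K y -> 0 <= t <= 1 -> K (t *: x + (1 - t) *: y).

Definition diam K : \bar R :=
  ereal_sup [set (edist x y)%:E | x in K & y in K].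

Definition inradius K : \bar R :=
  ereal_sup [set rho%:E | rho in [set rho : R | 0 <= rho /\
                                   exists c, eball c rho `<=` K]].

Definition packing (eta : R) T : \bar R :=
  ereal_sup [set (size s)%:R%:E | s in [set s : seq 'rV[R]_n |
     uniq s /\ (forall x, x \in s -> T x) /\
     (forall x y, x \in s -> y \in s -> x != y -> eta < edist x y)]].

Definition Mloc (cstar : R) K (eps : R) : \bar R :=
  ereal_sup [set packing (eps / cstar) (eball theta eps `&` K) | theta in K].

Definition elog (a : \bar R) : \bar R :=
  match a with
  | r%:E => if (0 < r)%R then (ln r)%:E else -oo
  | +oo => +oo
  | -oo => -oo
  end%E.

Definition eps_star (cstar : R) K (sigma : R) : \bar R :=
  ereal_sup [set e%:E | e in [set e : R | 0 <= e /\
       ((e ^+ 2 / sigma ^+ 2)%:E <= elog (Mloc cstar K e))%E]].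

(* Gaussian expectation: integrate the coordinates listed in s against
   N(0, sigma^2), one at a time, starting from the vector x. *)
Fixpoint gauss_iter (sigma : R) (s : seq 'I_n)
    (f : 'rV[R]_n -> \bar R) (x : 'rV[R]_n) : \bar R :=
  match s with
  | [::] => f x
  | i :: s' => (\int[normal_prob 0 sigma]_t
        gauss_iter sigma s' f (\row_j (if j == i then t else x ord0 j)))%E
  end.

Definition gauss_exp (sigma : R) (f : 'rV[R]_n -> \bar R) : \bar R :=
  gauss_iter sigma (enum 'I_n) f 0.

Definition is_lse K (proj : 'rV[R]_n -> 'rV[R]_n) : Prop :=
  forall y, K (proj y) /\ forall nu, K nu -> edist y (proj y) ^+ 2 <= edist y nu ^+ 2.

Definition lse_risk2 K (proj : 'rV[R]_n -> 'rV[R]_n) (sigma : R) : \bar R :=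
  ereal_sup [set gauss_exp sigma (fun xi => (edist (proj (mu + xi)) mu ^+ 2)%:E)
            | mu in K].

End defs.

(* The least squares estimator is the metric projection onto the convex set K, so it is
   never farther than the observation from any point of K: its risk is at most
   E|xi|^2 <= 6 sigma^2 n, and always at most d^2.  For the lower bound on eps^* we
   exhibit local packings.  If sigma <= r / sqrt n, K contains a ball of radius
   eps = sigma sqrt n / 4; a Gilbert-Varshamov code in {-1,1}^n with minimum Hamming
   distance > n/16 has at least e^(n/16) words, and scaled onto the sphere of radius eps
   it is eps/2-separated, so log M^loc(eps) >= n/16 = eps^2/sigma^2 and eps^* >= eps.
   If sigma >= 2d, two points of K at distance > d/2 give
   log M^loc(d) >= log 2 >= d^2/sigma^2, so eps^* >= d. *)

From Pilot Require Import Defs.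
From HB Require Import structures.
From mathcomp Require Import all_boot all_order all_algebra.
From mathcomp Require Import all_classical all_reals all_analysis.
From mathcomp Require Import measurable_realfun ring lra.
Import Order.TTheory GRing.Theory Num.Theory.
Import numFieldTopology.Exports.
Local Open Scope classical_set_scope.
Local Open Scope ring_scope.

Section normal_second_moment.
Context {R : realType}.
Local Notation mu := (@lebesgue_measure R).

Lemma normal_prob_integralE (m s : R) (f : R -> \bar R) :
  (forall x, 0 <= f x)%E -> measurable_fun [set: R] f ->
  (\int[normal_prob m s]_x f x = \int[mu]_x (f x * (normal_pdf m s x)%:E))%E.
Proof.
move=> f0 mf.
have numu := normal_prob_dominates m s.
rewrite -(Radon_Nikodym_SigmaFinite.change_of_variables numu)//.
apply: ae_eq_integral => //.
- apply: emeasurable_funM => //.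
  exact: measurable_int (Radon_Nikodym_SigmaFinite.f_integrable _).
- by apply: emeasurable_funM => //; apply/measurable_EFinP; exact: measurable_normal_pdf.
- apply: ae_eqe_mul2l; apply: integral_ae_eq => //.
  + exact: Radon_Nikodym_SigmaFinite.f_integrable.
  + by apply/measurable_EFinP; exact: measurable_normal_pdf.
  + by move=> E _ mE; rewrite -Radon_Nikodym_SigmaFinite.f_integral.
Qed.

(* With a := x^2 / (8 s^2), the left-hand side is 8 s^2 a e^(-3a) e^(-a) up to the
   normalisation, and 3a e^(-3a) <= 1. *)
Lemma sqr_mul_normal_pdf_le (s x : R) : 0 < s ->
  x ^+ 2 * normal_pdf 0 s x <= 16 / 3 * s ^+ 2 * normal_pdf 0 (2 * s) x.
Proof.
move=> s0.
have s2 : 0 < s ^+ 2 by rewrite exprn_gt0.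
have s2s : 2 * s != 0 by rewrite mulf_neq0 ?lt0r_neq0.
rewrite (normal_pdfE _ (lt0r_neq0 s0)) (normal_pdfE _ s2s).
rewrite /normal_peak /normal_fun !subr0.
have -> : (2 * s) ^+ 2 * pi *+ 2 = 2 ^+ 2 * (s ^+ 2 * pi *+ 2).
  by rewrite exprMn -mulrA mulrnAr.
rewrite sqrtrM ?sqr_ge0 // sqrtr_sqr ger0_norm // invfM.
set P := (Num.sqrt (s ^+ 2 * pi *+ 2))^-1.
have P0 : 0 <= P by rewrite invr_ge0 sqrtr_ge0.
set a := x ^+ 2 / (s ^+ 2 * 8).
have -> : - x ^+ 2 / (s ^+ 2 *+ 2) = - a + - (3 * a).
  by rewrite /a -mulr_natr; field; rewrite gt_eqF.
have -> : - x ^+ 2 / ((2 * s) ^+ 2 *+ 2) = - a.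
  by rewrite /a -mulr_natr exprMn; field; rewrite gt_eqF.
have -> : x ^+ 2 = 8 * s ^+ 2 * a by rewrite /a; field; rewrite gt_eqF.
rewrite expRD.
have a3 : 3 * a * expR (- (3 * a)) <= 1.
  rewrite expRN ler_pdivrMr ?expR_gt0 // mul1r.
  by apply: le_trans (expR_ge1Dx _); rewrite lerDr.
have Pa : 0 <= P * expR (- a) by rewrite mulr_ge0 // expR_ge0.
move: a3 Pa; set u := expR (- (3 * a)); set v := expR (- a) => a3 Pa.
have -> : 8 * s ^+ 2 * a * (P * (v * u)) = 8 / 3 * s ^+ 2 * (P * v) * (3 * a * u).
  by field.
have -> : 16 / 3 * s ^+ 2 * (2^-1 * P * v) = 8 / 3 * s ^+ 2 * (P * v) * 1.
  by field.
by apply: ler_wpM2l => //; rewrite mulr_ge0 // mulr_ge0 // ?sqr_ge0.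
Qed.

Lemma normal_second_moment_le (s : R) : 0 < s ->
  (\int[normal_prob 0 s]_x (x ^+ 2)%:E <= (6 * s ^+ 2)%:E)%E.
Proof.
move=> s0.
have mpdf t : measurable_fun [set: R] (fun x => (normal_pdf 0 t x)%:E).
  by apply/measurable_EFinP; exact: measurable_normal_pdf.
rewrite normal_prob_integralE; last 2 first.
- by move=> x; rewrite lee_fin sqr_ge0.
- by apply/measurable_EFinP; exact: measurable_funX.
apply: (@le_trans _ _ (\int[mu]_x ((16 / 3 * s ^+ 2)%:E * (normal_pdf 0 (2 * s) x)%:E))%E).
  apply: ge0_le_integral => //.
  - by move=> x _; rewrite mule_ge0 // lee_fin ?sqr_ge0 ?normal_pdf_ge0.
  - by apply: emeasurable_funM (mpdf _); apply/measurable_EFinP; exact: measurable_funX.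
  - exact: emeasurable_funM (mpdf _).
  - by move=> x _; rewrite -!EFinM lee_fin sqr_mul_normal_pdf_le.
rewrite ge0_integralZl_EFin //; last 3 first.
- by move=> x _; rewrite lee_fin normal_pdf_ge0.
- exact: mpdf.
- by rewrite mulr_ge0 // sqr_ge0.
rewrite integral_normal_pdf mule1 lee_fin ler_wpM2r ?sqr_ge0 //.
lra.
Qed.

End normal_second_moment.

Section euclidean.
Context {R : realType} {n : nat}.
Implicit Types (a b x y : 'rV[R]_n).

Definition sqnorm x : R := \sum_i x ord0 i ^+ 2.
Definition dotv a b : R := \sum_i a ord0 i * b ord0 i.

Lemma sqnorm_ge0 x : 0 <= sqnorm x.
Proof. by rewrite sumr_ge0 // => i _; rewrite sqr_ge0. Qed.

Lemma sqnormZ (t : R) x : sqnorm (t *: x) = t ^+ 2 * sqnorm x.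
Proof. by rewrite /sqnorm mulr_sumr; apply: eq_bigr => i _; rewrite mxE exprMn. Qed.

Lemma sqnormBZ a b (t : R) :
  sqnorm (a - t *: b) = sqnorm a - 2 * t * dotv a b + t ^+ 2 * sqnorm b.
Proof.
rewrite /sqnorm /dotv !mulr_sumr -sumrB -big_split /=; apply: eq_bigr => i _.
by rewrite !mxE; ring.
Qed.

Lemma edistE x y : Defs.edist x y = Num.sqrt (sqnorm (x - y)).
Proof. by []. Qed.

Lemma sqr_edist x y : Defs.edist x y ^+ 2 = sqnorm (x - y).
Proof. by rewrite /Defs.edist /Defs.enorm sqr_sqrtr // sqnorm_ge0. Qed.

Lemma edist_ge0 x y : 0 <= Defs.edist x y.
Proof. exact: sqrtr_ge0. Qed.

Lemma edistC x y : Defs.edist x y = Defs.edist y x.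
Proof.
rewrite /Defs.edist /Defs.enorm; congr Num.sqrt; apply: eq_bigr => i _.
by rewrite !mxE; ring.
Qed.

Lemma edistxx x : Defs.edist x x = 0.
Proof.
rewrite /Defs.edist /Defs.enorm subrr -[RHS]sqrtr0; congr Num.sqrt.
by apply: big1 => i _; rewrite mxE expr0n.
Qed.

Lemma edist_le x y (e : R) : 0 <= e -> (Defs.edist x y <= e) = (sqnorm (x - y) <= e ^+ 2).
Proof.
move=> e0; rewrite -[e in LHS]ger0_norm // -sqrtr_sqr.
by rewrite /Defs.edist /Defs.enorm ler_sqrt // sqr_ge0.
Qed.

Lemma edist_gt x y (e : R) : 0 <= e -> (e < Defs.edist x y) = (e ^+ 2 < sqnorm (x - y)).
Proof. by move=> e0; rewrite !ltNge edist_le. Qed.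

Lemma edist_le_diam {K : set 'rV[R]_n} {d : R} {x y} :
  diam K = d%:E -> K x -> K y -> Defs.edist x y <= d.
Proof.
by move=> dK Kx Ky; rewrite -lee_fin -dK; apply: ereal_sup_ubound; exists x => //; exists y.
Qed.

End euclidean.

(* [ge0_le_integral] requires measurability, which an arbitrary projection does not
   provide; for nonnegative integrands the integral is a supremum over simple minorants. *)
Lemma ge0_le_integral_nonmeas {R : realType} d (T : measurableType d)
    (m : {measure set T -> \bar R}) (f g : T -> \bar R) :
  (forall x, 0 <= f x)%E -> (forall x, f x <= g x)%E ->
  (\int[m]_x f x <= \int[m]_x g x)%E.
Proof.
move=> f0 fg.
have g0 x : (0 <= g x)%E by apply: le_trans (fg x).
rewrite !ge0_integralE //; apply: le_ereal_sup => _ [h hf <-]; exists h => //= x.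
by apply: le_trans (hf x) _; rewrite /patch in_setT.
Qed.

Section gauss_iter.
Context {R : realType} {n : nat} (s : R).
Implicit Types (f g : 'rV[R]_n -> \bar R) (l : seq 'I_n) (x : 'rV[R]_n).
Local Open Scope ereal_scope.

Lemma gauss_iter_ge0 l f x : (forall y, 0 <= f y) -> 0 <= gauss_iter s l f x.
Proof.
move=> f0; elim: l x => [|i l IH] x /=; first exact: f0.
by apply: integral_ge0 => t _; exact: IH.
Qed.

Lemma le_gauss_iter l f g x : (forall y, 0 <= f y) -> (forall y, f y <= g y) ->
  gauss_iter s l f x <= gauss_iter s l g x.
Proof.
move=> f0 fg; elim: l x => [|i l IH] x /=; first exact: fg.
by apply: ge0_le_integral_nonmeas => t; [exact: gauss_iter_ge0|exact: IH].
Qed.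

Lemma gauss_iter_cst l (c : R) x : gauss_iter s l (fun=> c%:E) x = c%:E.
Proof.
elim: l x => [|i l IH] x //=.
under eq_integral do rewrite IH.
by rewrite integral_cst //= probability_setT mule1.
Qed.

Lemma gauss_iter_sqnorm_le l x : (0 < s)%R -> uniq l ->
  gauss_iter s l (fun y => (sqnorm y)%:E) x <=
  ((\sum_(i | i \notin l) x ord0 i ^+ 2) + 6 * s ^+ 2 * (size l)%:R)%:E.
Proof.
move=> s0; elim: l x => [|i l IH] x /=.
  by move=> _; rewrite mulr0 addr0 lee_fin le_eqVlt; apply/orP; left; apply/eqP/eq_bigl.
move=> /andP[il ul].
set c := ((\sum_(j | j \notin i :: l) x ord0 j ^+ 2) + 6 * s ^+ 2 * (size l)%:R)%R.
have c0 : (0 <= c)%R.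
  rewrite addr_ge0 ?sumr_ge0 // => [j _|]; first by rewrite sqr_ge0.
  by rewrite mulr_ge0 // mulr_ge0 // sqr_ge0.
apply: (@le_trans _ _ (\int[normal_prob 0 s]_t ((t ^+ 2)%:E + c%:E))).
  apply: ge0_le_integral_nonmeas => t.
    by apply: gauss_iter_ge0 => y; rewrite lee_fin sqnorm_ge0.
  apply: le_trans (IH _ ul) _; rewrite -EFinD lee_fin /c addrA lerD2r.
  rewrite (bigD1 i) //= mxE eqxx lerD2l le_eqVlt; apply/orP; left; apply/eqP.
  apply: eq_big => j; first by rewrite in_cons negb_or andbC.
  by rewrite mxE => /andP[_ /negbTE ->].
have sqr0 (t : R) : [set: R] t -> 0 <= (t ^+ 2)%:E by rewrite lee_fin sqr_ge0.
have msqr : measurable_fun [set: R] (fun t : R => (t ^+ 2)%:E).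
  by apply/measurable_EFinP; exact: measurable_funX.
have cE0 (t : R) : [set: R] t -> 0 <= c%:E by rewrite lee_fin.
rewrite ge0_integralD //.
rewrite integral_cst //= probability_setT mule1.
apply: (le_trans (leeD (normal_second_moment_le s s0) (lexx c%:E))).
by rewrite -EFinD lee_fin /c -addn1 natrD le_eqVlt; apply/orP; left; apply/eqP; ring.
Qed.

Lemma gauss_exp_cst (c : R) : gauss_exp s (fun _ : 'rV[R]_n => c%:E) = c%:E.
Proof. exact: gauss_iter_cst. Qed.

Lemma gauss_exp_sqnorm_le : (0 < s)%R ->
  gauss_exp s (fun y : 'rV[R]_n => (sqnorm y)%:E) <= (6 * s ^+ 2 * n%:R)%:E.
Proof.
move=> s0; apply: le_trans (gauss_iter_sqnorm_le _ _ s0 (enum_uniq _)) _.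
rewrite big_pred0 ?add0r ?size_enum_ord // => i.
by rewrite mem_enum.
Qed.

End gauss_iter.

Section least_squares.
Context {R : realType} {n : nat} {K : set 'rV[R]_n} {P : 'rV[R]_n -> 'rV[R]_n}.
Hypothesis lseP : is_lse K P.

Lemma lse_risk2_le_diam (d s : R) : diam K = d%:E -> (lse_risk2 K P s <= (d ^+ 2)%:E)%E.
Proof.
move=> dK; apply: ub_ereal_sup => _ [mu Kmu <-].
rewrite -(gauss_exp_cst (n:=n) s (d ^+ 2)) /gauss_exp; apply: le_gauss_iter => y.
  by rewrite lee_fin sqr_ge0.
have d0 : 0 <= d := le_trans (edist_ge0 mu mu) (edist_le_diam dK Kmu Kmu).
by rewrite lee_fin ler_sqr ?nnegrE ?edist_ge0 // (edist_le_diam dK (lseP _).1 Kmu).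
Qed.

Hypothesis convexK : convex_set_e K.

Lemma lse_dotv_le0 y k : K k -> dotv (y - P y) (k - P y) <= 0.
Proof.
move=> Kk; set a := y - P y; set b := k - P y.
have key t : 0 <= t <= 1 -> 2 * t * dotv a b <= t ^+ 2 * sqnorm b.
  move=> t01; have := (lseP y).2 _ (convexK k (P y) t Kk (lseP y).1 t01).
  rewrite !sqr_edist.
  have -> : y - (t *: k + (1 - t) *: P y) = a - t *: b.
    by rewrite /a /b scalerBr scalerBl scale1r; apply/rowP => i; rewrite !mxE; ring.
  rewrite sqnormBZ; lra.
rewrite leNgt; apply/negP => ab0.
have ab1 : 2 * dotv a b <= sqnorm b.
  by have := key 1; rewrite mulr1 expr1n mul1r ler01 lexx; apply.
have b0 : 0 < sqnorm b by lra.
pose t := dotv a b / (2 * sqnorm b).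
have t0 : 0 < t by rewrite divr_gt0 // mulr_gt0.
have t1 : t <= 1 by rewrite ler_pdivrMr ?mulr_gt0 // mul1r; lra.
have := key t; rewrite (ltW t0) t1 => /(_ isT).
have -> : t ^+ 2 * sqnorm b = t * (dotv a b / 2) by rewrite /t; field; rewrite gt_eqF.
nra.
Qed.

Lemma lse_edist_le y k : K k -> Defs.edist (P y) k <= Defs.edist y k.
Proof.
move=> Kk; rewrite edist_le ?edist_ge0 // sqr_edist.
have -> : y - k = (y - P y) - 1 *: (k - P y).
  by rewrite scale1r; apply/rowP => i; rewrite !mxE; ring.
have -> : P y - k = - 1 *: (k - P y).
  by rewrite scaleN1r opprB.
rewrite sqnormBZ sqnormZ expr1n mul1r mulr1 sqrrN expr1n mul1r.
have := lse_dotv_le0 y k Kk; have := sqnorm_ge0 (y - P y); lra.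
Qed.

Lemma lse_risk2_le_dim (s : R) : 0 < s -> (lse_risk2 K P s <= (6 * s ^+ 2 * n%:R)%:E)%E.
Proof.
move=> s0; apply: ub_ereal_sup => _ [mu Kmu <-].
apply: le_trans (gauss_exp_sqnorm_le _ s0); rewrite /gauss_exp; apply: le_gauss_iter => xi.
  by rewrite lee_fin sqr_ge0.
rewrite lee_fin -[sqnorm xi]sqr_sqrtr ?sqnorm_ge0 // ler_sqr ?nnegrE ?edist_ge0 ?sqrtr_ge0 //.
have -> : Num.sqrt (sqnorm xi) = Defs.edist (mu + xi) mu.
  by rewrite edistE addrAC subrr add0r.
exact: lse_edist_le.
Qed.

End least_squares.

Lemma half_le_ln2 {R : realType} : 1 / 2 <= ln (2 : R).
Proof.
have : ln (1 + - 2^-1) <= - 2^-1 :> R by apply: le_ln1Dx; lra.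
by rewrite (_ : 1 + - 2^-1 = 2^-1) ?lnV ?posrE //; [lra | field].
Qed.

Section hamming_codes.
Context {n : nat}.
Local Close Scope classical_set_scope.
Local Notation word := {ffun 'I_n -> bool}.
Implicit Types (u v w : word) (S : {set word}).

Definition hamming u v : nat := #|[set i | u i != v i]|.

Definition hamming_ball w (t : nat) : {set word} := [set v | (hamming v w <= t)%N].

Definition is_code (t : nat) S :=
  [forall u in S, forall v in S, (u != v) ==> (t < hamming u v)%N].

Lemma hammingC u v : hamming u v = hamming v u.
Proof. by rewrite /hamming; apply: eq_card => i; rewrite !inE eq_sym. Qed.

Lemma hammingxx u : hamming u u = 0%N.
Proof. by apply/eqP; rewrite cards_eq0; apply/eqP/setP => i; rewrite !inE eqxx. Qed.

Lemma is_codeP t S :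
  reflect {in S &, forall u v, u != v -> t < hamming u v}%N (is_code t S).
Proof.
apply: (iffP forallP) => [h u v uS vS uv|h u].
  by move: (h u); rewrite uS => /forallP/(_ v); rewrite vS uv.
by apply/implyP => uS; apply/forallP => v; apply/implyP => vS; apply/implyP; exact: h.
Qed.

Lemma sum_expr_hamming (R : comPzRingType) (x : R) w :
  \sum_v x ^+ hamming v w = (1 + x) ^+ n.
Proof.
have -> : (1 + x) ^+ n = \prod_(i : 'I_n) \sum_(b : bool) (if b != w i then x else 1).
  rewrite -[n in LHS]card_ord -prodr_const; apply: eq_bigr => i _.
  by rewrite big_bool /=; case: (w i) => /=; rewrite addrC.
rewrite bigA_distr_bigA /=; apply: eq_bigr => v _.
by rewrite /hamming -prodr_const big_mkcond /=; apply: eq_bigr => i _; rewrite inE.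
Qed.

(* Each point of the ball of radius t is weighted by 4^(t - hamming v w) >= 1. *)
Lemma card_hamming_ball_le (R : realFieldType) w t :
  #|hamming_ball w t|%:R <= 4 ^+ t * (5 / 4) ^+ n :> R.
Proof.
have -> : 5 / 4 = 1 + 4^-1 :> R by field.
rewrite -(sum_expr_hamming _ _ w) mulr_sumr -sum1_card natr_sum.
apply: (@le_trans _ _ (\sum_(v in hamming_ball w t) 4 ^+ t * 4^-1 ^+ hamming v w)).
  apply: ler_sum => v; rewrite inE => vt.
  apply: (@le_trans _ _ (4 ^+ t * 4^-1 ^+ t)); first by rewrite -exprMn mulfV // expr1n.
  apply: ler_wpM2l; first by rewrite exprn_ge0.
  by apply: ler_wiXn2l; rewrite ?invr_ge0 ?invf_le1 ?ler1n.
rewrite [X in _ <= X](bigID (mem (hamming_ball w t))) /= lerDl.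
by rewrite sumr_ge0 // => v _; rewrite mulr_ge0 ?exprn_ge0 ?invr_ge0.
Qed.

(* A code of maximal size is covering: every word lies in the ball of some codeword. *)
Lemma gilbert_varshamov t :
  exists2 S, is_code t S & (2 ^ n <= \sum_(s in S) #|hamming_ball s t|)%N.
Proof.
have code0 : is_code t finset.set0 by apply/forallP => u; rewrite inE.
case: (arg_maxnP (fun S => #|S|) code0) => S codeS maxS; exists S => //.
have cover v : exists2 s, s \in S & v \in hamming_ball s t.
  apply/exists_inP; apply: contraT; rewrite negb_exists_in => /forall_inP farv.
  have vS : v \notin S by apply/negP => /farv; rewrite inE hammingxx.
  suff /maxS : is_code t (v |: S) by rewrite /= cardsU1 vS add1n ltnn.
  apply/is_codeP => a b; rewrite !in_setU1.
  have far s : s \in S -> (t < hamming v s)%N by move/farv; rewrite inE ltnNge.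
  case/predU1P=> [->|aS] /predU1P[->|bS]; rewrite ?eqxx // => ab.
  - exact: far.
  - by rewrite hammingC; exact: far.
  - exact: (is_codeP _ _ codeS).
have -> : (2 ^ n = #|{: word}|)%N by rewrite card_ffun card_bool card_ord.
rewrite -sum1_card; under [X in (_ <= X)%N]eq_bigr do rewrite -sum1_card.
rewrite (exchange_big_dep xpredT) //=; apply: leq_sum => v _.
have [s sS vB] := cover v.
by rewrite (bigD1 s) /= ?sS ?vB // leq_addr.
Qed.

Lemma exists_code_ln_card (R : realType) : exists S,
  [/\ is_code (n %/ 16) S, (0 < #|S|)%N & n%:R / 16 <= ln (#|S|%:R : R)].
Proof.
set t := (n %/ 16)%N.
have [S codeS cardS] := gilbert_varshamov t.
have {cardS} : (2 ^ n)%:R <= #|S|%:R * (4 ^+ t * (5 / 4) ^+ n) :> R.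
  apply: le_trans (_ : \sum_(s in S) #|hamming_ball s t|%:R <= _).
    by rewrite -natr_sum ler_nat.
  rewrite -sum1_card natr_sum mulr_suml; apply: ler_sum => s _.
  by rewrite mul1r card_hamming_ball_le.
have B0 : 0 < 4 ^+ t * (5 / 4) ^+ n :> R by rewrite mulr_gt0 // exprn_gt0.
move=> cardS; have S0 : 0 < #|S|%:R :> R.
  by rewrite -(pmulr_lgt0 _ B0) (lt_le_trans _ cardS) // ltr0n expn_gt0.
exists S; split => //; first by rewrite -(ltr0n R) S0.
move: cardS; rewrite -ler_ln ?posrE ?(mulr_gt0 S0 B0) ?ltr0n ?expn_gt0 //.
rewrite !lnM ?posrE ?exprn_gt0 // natrX !lnXn //.
have ln2 := @half_le_ln2 R.
have ln54 : ln (5 / 4 : R) <= 1 / 4.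
  have : ln (1 + 4^-1) <= 4^-1 :> R by apply: le_ln1Dx; lra.
  by rewrite (_ : 1 + 4^-1 = 5 / 4); [lra | field].
have ln4 : ln (4 : R) <= 3.
  have : ln (1 + 3) <= 3 :> R by apply: le_ln1Dx; lra.
  by rewrite (_ : 1 + 3 = 4).
have t16 : t%:R * 16 <= n%:R :> R by rewrite -natrM ler_nat leq_trunc_div.
have n0 : 0 <= n%:R :> R by rewrite ler0n.
have t0 : 0 <= t%:R :> R by rewrite ler0n.
rewrite -!(mulr_natr (ln _)).
nra.
Qed.

End hamming_codes.

Lemma le_elog {R : realType} (m : R) (M : \bar R) :
  0 < m -> (m%:E <= M)%E -> ((ln m)%:E <= elog M)%E.
Proof.
move=> m0; case: M => [x| |] /=.
- rewrite lee_fin => mx; have x0 : 0 < x := lt_le_trans m0 mx.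
  by rewrite x0 lee_fin ler_ln ?posrE.
- by move=> _; exact: leey.
- by rewrite leeNy_eq.
Qed.

Section local_packing.
Context {R : realType} {n : nat} (cstar : R) (K : set 'rV[R]_n).
Local Open Scope ereal_scope.

Lemma size_le_Mloc (e : R) c (s : seq 'rV[R]_n) : K c -> uniq s ->
  (forall x, x \in s -> (eball c e `&` K) x) ->
  {in s &, forall x y, x != y -> e / cstar < Defs.edist x y}%R ->
  (size s)%:R%:E <= Mloc cstar K e.
Proof.
move=> Kc us sB sep; apply: le_trans (_ : packing (e / cstar) (eball c e `&` K) <= _).
  by apply: ereal_sup_ubound; exists s.
by apply: ereal_sup_ubound; exists c.
Qed.

Lemma le_eps_star (s e : R) : (0 <= e)%R ->
  (e ^+ 2 / s ^+ 2)%:E <= elog (Mloc cstar K e) -> e%:E <= eps_star cstar K s.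
Proof. by move=> e0 eM; apply: ereal_sup_ubound; exists e. Qed.

End local_packing.

Section hypercube.
Context {R : realType} {n : nat}.
Local Notation word := {ffun 'I_n -> bool}.
Implicit Types (u v : word) (c : 'rV[R]_n).

Definition sign_vec v : 'rV[R]_n := \row_i (if v i then 1 else -1).

Lemma sqnorm_sign_vec v : sqnorm (sign_vec v) = n%:R.
Proof.
rewrite -[n in RHS]card_ord -sumr_const; apply: eq_bigr => i _.
by rewrite mxE; case: (v i); rewrite ?sqrrN expr1n.
Qed.

Lemma sqnorm_sign_vecB u v : sqnorm (sign_vec u - sign_vec v) = 4 * (hamming u v)%:R.
Proof.
rewrite /hamming mulr_natr -sumr_const big_mkcond /=; apply: eq_bigr => i _.
by rewrite inE !mxE; case: (u i); case: (v i) => /=; ring.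
Qed.

Hypothesis n_gt0 : (0 < n)%N.

Let sqr_sqrt_n : Num.sqrt n%:R ^+ 2 = n%:R :> R.
Proof. by rewrite sqr_sqrtr ?ler0n. Qed.

Lemma edist_hypercube_center c (e : R) v : 0 <= e ->
  Defs.edist (c + (e / Num.sqrt n%:R) *: sign_vec v) c = e.
Proof.
move=> e0; rewrite edistE addrAC subrr add0r sqnormZ sqnorm_sign_vec expr_div_n.
by rewrite sqr_sqrt_n divfK ?pnatr_eq0 -?lt0n // sqrtr_sqr ger0_norm.
Qed.

Lemma edist_hypercube c (e : R) u v : 0 < e -> (n < 16 * hamming u v)%N ->
  e / 2 < Defs.edist (c + (e / Num.sqrt n%:R) *: sign_vec u)
                     (c + (e / Num.sqrt n%:R) *: sign_vec v).
Proof.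
move=> e0 nuv; rewrite edist_gt ?divr_ge0 ?ltW //.
rewrite opprD addrACA subrr add0r -scalerBr sqnormZ sqnorm_sign_vecB.
rewrite !expr_div_n sqr_sqrt_n.
have n0 : 0 < n%:R :> R by rewrite ltr0n.
have q0 : 0 < e ^+ 2 / n%:R by rewrite divr_gt0 ?exprn_gt0.
have -> : e ^+ 2 / 2 ^+ 2 = e ^+ 2 / n%:R * n%:R / 4 by field; rewrite gt_eqF.
have : n%:R < 16 * (hamming u v)%:R :> R by rewrite -natrM ltr_nat.
move: q0; set q := e ^+ 2 / n%:R; nra.
Qed.

End hypercube.

Section regimes.
Context {R : realType} {n : nat} {cstar : R} {K : set 'rV[R]_n}.
Hypothesis cstar_ge2 : 2 <= cstar.
Local Open Scope ereal_scope.

Lemma eps_star_ge_diam (d s : R) : K !=set0 -> diam K = d%:E -> (2 * d <= s)%R ->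
  d%:E <= eps_star cstar K s.
Proof.
move=> [x0 Kx0] dK ds.
have d0 : (0 <= d)%R by rewrite -(edistxx x0) (edist_le_diam dK).
have [->|d_gt0] := eqVneq d 0%R.
  apply: le_eps_star => //; rewrite expr0n /= mul0r.
  apply: le_trans (le_elog 1%R _ ltr01 _); first by rewrite ln1.
  apply: le_trans (size_le_Mloc cstar K _ _ [:: x0] Kx0 _ _ _) => //.
  - by move=> _ /[!inE] /eqP ->; split => //; rewrite /eball /= edistxx.
  - by move=> _ _ /[!inE] /eqP -> /eqP ->; rewrite eqxx.
have : (d / 2)%:E < diam K by rewrite dK lte_fin; lra.
case/ereal_sup_gt => _ [x Kx [y Ky <-]]; rewrite lte_fin => xy.
have cst0 : (0 < cstar)%R by apply: lt_le_trans cstar_ge2.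
have dc : (d / cstar <= d / 2)%R by apply: (ler_wpM2l d0); rewrite lef_pV2 ?posrE.
apply: le_eps_star => //; apply: (@le_trans _ _ (ln (2 : R))%:E).
  rewrite lee_fin; apply: le_trans half_le_ln2.
  have s0 : (0 < s)%R by lra.
  by rewrite ler_pdivrMr ?exprn_gt0 //; nra.
apply: le_elog => //; apply: le_trans (size_le_Mloc cstar K _ _ [:: x; y] Kx _ _ _) => //=.
- rewrite /= inE andbT; apply/eqP => exy; move: xy; rewrite exy edistxx; lra.
- move=> z /[!inE] /orP[] /eqP ->; split => //; rewrite /eball /=.
    by rewrite edistxx.
  by rewrite edistC (edist_le_diam dK).
- move=> u v /[!inE] /orP[] /eqP -> /orP[] /eqP -> //; rewrite ?eqxx // => _.
    exact: le_lt_trans dc xy.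
  by rewrite edistC; exact: le_lt_trans dc xy.
Qed.

Lemma eps_star_ge_inradius (r s : R) : (0 < n)%N -> inradius K = r%:E -> (0 < s)%R ->
  (s * Num.sqrt n%:R <= r)%R -> (s * Num.sqrt n%:R / 4)%:E <= eps_star cstar K s.
Proof.
move=> n0 rK s0 sr; set e := (s * Num.sqrt n%:R / 4)%R.
have sn0 : (0 < Num.sqrt n%:R :> R)%R by rewrite sqrtr_gt0 ltr0n.
have e0 : (0 < e)%R by rewrite divr_gt0 // mulr_gt0.
have r0 : (0 < r)%R := lt_le_trans (mulr_gt0 s0 sn0) sr.
have : (r / 2)%:E < inradius K by rewrite rK lte_fin; lra.
case/ereal_sup_gt => _ [rho [_ [c cK]] <-]; rewrite lte_fin => r2rho.
have eK : eball c e `<=` K.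
  by move=> x; rewrite /eball /= => xe; apply: cK; rewrite /eball /= /e in xe *; lra.
have Kc : K c by apply: eK; rewrite /eball /= edistxx ltW.
have [S [codeS S0 lnS]] := @exists_code_ln_card n R.
pose p v := (c + (e / Num.sqrt n%:R) *: sign_vec v)%R.
have sep : {in enum S &, forall u v, u != v -> e / 2 < Defs.edist (p u) (p v)}%R.
  move=> u v; rewrite !mem_enum => uS vS uv; apply: edist_hypercube => //.
  apply: leq_trans (ltn_ceil n (isT : (0 < 16)%N)) _.
  by rewrite mulnC leq_mul2l /= (is_codeP _ _ codeS).
have cst0 : (0 < cstar)%R by apply: lt_le_trans cstar_ge2.
have ec : (e / cstar <= e / 2)%R by apply: (ler_wpM2l (ltW e0)); rewrite lef_pV2 ?posrE.
have SM : #|S|%:R%:E <= Mloc cstar K e.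
  rewrite cardE -(size_map p); apply: size_le_Mloc Kc _ _ _.
  - rewrite map_inj_in_uniq ?enum_uniq // => u v uS vS puv; apply/eqP/negP => /negP uv.
    by move: (sep u v uS vS uv); rewrite puv edistxx; lra.
  - move=> _ /mapP[v _ ->].
    have pB : eball c e (p v) by rewrite /eball /p /= edist_hypercube_center // ltW.
    by split; last exact: eK.
  - move=> _ _ /mapP[u uS ->] /mapP[v vS ->] puv.
    by apply: le_lt_trans ec (sep u v uS vS _); apply: contraNneq puv => ->.
apply: le_eps_star; first exact: ltW.
apply: le_trans (le_elog _ _ _ SM); last by rewrite ltr0n.
suff -> : (e ^+ 2 / s ^+ 2 = n%:R / 16)%R by rewrite lee_fin.
by rewrite /e !exprMn sqr_sqrtr ?ler0n //; field; rewrite gt_eqF // exprn_gt0.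
Qed.

End regimes.

Lemma le_cst_mul_sqr {R : realType} (x y : \bar R) (B C e : R) :
  (x <= B%:E)%E -> (e%:E <= y)%E -> 0 <= e -> 0 <= C -> B <= C * e ^+ 2 ->
  (x <= C%:E * (y * y))%E.
Proof.
move=> xB ey e0 C0 BC; apply: le_trans xB _.
apply: (@le_trans _ _ (C%:E * (e%:E * e%:E))%E); first by rewrite -!EFinM lee_fin -expr2.
by apply: lee_wpmul2l; rewrite ?lee_fin //; apply: lee_pmul; rewrite ?lee_fin.
Qed.

Theorem mainTheorem18 (R : realType) :
  exists c0 : R, 0 < c0 /\
  forall cstar : R, c0 <= cstar ->
  exists C c1 c2 : R, [/\ 0 < C, 0 < c1 & 0 < c2] /\
  forall (n : nat) (K : set 'rV[R]_n) (d r sigma : R)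
         (proj : 'rV[R]_n -> 'rV[R]_n),
    K !=set0 -> closed K -> convex_set_e K ->
    diam K = d%:E -> inradius K = r%:E ->
    0 < sigma ->
    is_lse K proj ->
    (sigma <= c1 * r / Num.sqrt n%:R \/ c2 * d <= sigma) ->
    (lse_risk2 K proj sigma <= C%:E * (eps_star cstar K sigma * eps_star cstar K sigma))%E.
Proof.
exists 2; split => // cstar cstar_ge2.
(* Closedness only matters for the existence of [proj], which [is_lse] provides. *)
exists 100, 1, 2; split => // n K d r sigma proj K0 _ convexK dK rK s0 lseP.
case=> [small|large].
- have n0 : (0 < n)%N.
    by rewrite lt0n; apply: contraTneq small => ->; rewrite sqrtr0 invr0 mulr0 -ltNge.
  have sn0 : 0 < Num.sqrt n%:R :> R by rewrite sqrtr_gt0 ltr0n.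
  have sr : sigma * Num.sqrt n%:R <= r by move: small; rewrite mul1r ler_pdivlMr.
  apply: le_cst_mul_sqr (lse_risk2_le_dim lseP convexK sigma s0)
    (eps_star_ge_inradius cstar_ge2 r sigma n0 rK s0 sr) _ _ _ => //.
    by rewrite divr_ge0 // mulr_ge0 ?ltW.
  rewrite expr_div_n exprMn sqr_sqrtr ?ler0n //.
  by have := mulr_ge0 (sqr_ge0 sigma) (ler0n R n); lra.
- have [x Kx] := K0; have d0 : 0 <= d by rewrite -(edistxx x) (edist_le_diam dK).
  apply: le_cst_mul_sqr (lse_risk2_le_diam lseP d sigma dK)
    (eps_star_ge_diam cstar_ge2 d sigma K0 dK large) d0 _ _ => //.
  by have := sqr_ge0 d; lra.
Qed.
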